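(* Let $\mathcal{X}$ be a Banach space and $J:\mathcal{X}\to\mathbb{R}\cup\{\infty\}$ a convex, absolutely one-homogeneous functional. Let $v\in\mathcal{X}$ and $p\in\partial J(v)$, and define $$\mathcal{M}^{\mathrm{B}}=\{u\in\mathcal{X}: D_J^p(u,v)=0\},\qquad \mathcal{M}^{\mathrm{IC}}=\{u\in\mathcal{X}: [D_J^p(\cdot,v)\,\Box\, D_J^{-p}(\cdot,-v)](u)=0\}.$$ Then $\mathcal{M}^{\mathrm{B}}\subset\mathcal{M}^{\mathrm{IC}}$.
   Context: Absolutely one-homogeneous: $J(\lambda u)=|\lambda|J(u)$ for all $\lambda\in\mathbb{R}$. Bregman distance: $D_J^{q}(u,w)=J(u)-J(w)-\langle q,u-w\rangle$ for $q\in\partial J(w)$. Infimal convolution: $(F\Box G)(u)=\inf_{z\in\mathcal{X}}F(u-z)+G(z)$. *)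

From HB Require Import structures.
From mathcomp Require Import all_boot all_order all_algebra.
From mathcomp Require Import all_classical all_reals all_analysis.
Set Implicit Arguments. Unset Strict Implicit. Unset Printing Implicit Defensive.
Import Order.TTheory GRing.Theory Num.Theory.
Import numFieldNormedType.Exports.
Local Open Scope classical_set_scope.
Local Open Scope ring_scope.

Section Defs.
Variables (R : realType) (X : normedModType R).

Definition in_dual (p : X -> R) : Prop :=
  (forall (a : R) (x y : X), p (a *: x + y) = a * p x + p y) /\ continuous p.

(* J : X -> R \cup {+oo} (never -oo) *)
Definition proper_valued (J : X -> \bar R) : Prop := forall u, J u != -oo%E.

Definition convex_fun (J : X -> \bar R) : Prop :=
  forall (x y : X) (t : R), 0 < t < 1 ->
    (J ((1 - t) *: x + t *: y)%R <= (1 - t)%:E * J x + t%:E * J y)%E.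

Definition abs_one_homogeneous (J : X -> \bar R) : Prop :=
  forall (l : R) (u : X), J (l *: u) = (`|l|%:E * J u)%E.

Definition subdiff (J : X -> \bar R) (w : X) (p : X -> R) : Prop :=
  in_dual p /\ J w \is a fin_num /\
  forall u, (J w + (p (u - w)%R)%:E <= J u)%E.

Definition bregman (J : X -> \bar R) (q : X -> R) (u w : X) : \bar R :=
  (J u - J w - (q (u - w)%R)%:E)%E.

Definition infconv (F G : X -> \bar R) (u : X) : \bar R :=
  ereal_inf [set (F (u - z)%R + G z)%E | z in [set: X]].

End Defs.

From HB Require Import structures.
From mathcomp Require Import all_boot all_order all_algebra.
From mathcomp Require Import all_classical all_reals all_analysis.
From mathcomp Require Import lra.
Import Order.TTheory GRing.Theory Num.Theory.
Import numFieldNormedType.Exports.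
Local Open Scope classical_set_scope.
Local Open Scope ring_scope.

(* Bregman distances of a subgradient are nonnegative, so the infimal
   convolution is nonnegative.  For a one-homogeneous J a subgradient p at v
   satisfies <p, v> = J(v), and -p is a subgradient of J at -v; hence the
   choice z = 0 in the infimal convolution gives D_J^p(u, v) + 0, which
   vanishes on M^B. *)

Section Subgradients.
Variables (R : realType) (X : normedModType R).
Implicit Types (J : X -> \bar R) (p : X -> R) (u v w : X).

Section Dual.
Variable p : X -> R.
Hypothesis p_lin : forall (a : R) (x y : X), p (a *: x + y) = a * p x + p y.

Lemma dual0 : p 0 = 0.
Proof.
have := p_lin 1 0 0; rewrite scale1r addr0 mul1r => p00.
by apply: (addrI (p 0)); rewrite addr0 -p00.
Qed.

Lemma dualD x y : p (x + y) = p x + p y.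
Proof. by have := p_lin 1 x y; rewrite scale1r mul1r. Qed.

Lemma dualN x : p (- x) = - p x.
Proof. by have := p_lin (-1) x 0; rewrite addr0 dual0 addr0 scaleN1r mulN1r. Qed.

End Dual.

Lemma in_dualN p : in_dual p -> in_dual (fun y => - p y).
Proof.
move=> [p_lin p_cont]; split; last by move=> x; apply: continuousN; exact: p_cont.
by move=> a x y; rewrite p_lin mulrN opprD.
Qed.

Section OneHomogeneous.
Variable J : X -> \bar R.
Hypothesis J_hom : abs_one_homogeneous J.

Lemma one_homogeneous0 : J 0 = 0%E.
Proof. by rewrite -(scale0r (0 : X)) J_hom normr0 mul0e. Qed.

Lemma one_homogeneousN x : J (- x) = J x.
Proof. by rewrite -scaleN1r J_hom normrN normr1 mul1e. Qed.

(* Test the subgradient inequality at u = 0 and u = 2v. *)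
Lemma subdiff_one_homogeneous_eq v p : subdiff J v p -> J v = (p v)%:E.
Proof.
move=> [[p_lin _] [/EFin_fin_numP[r Jv] J_sub]]; rewrite Jv; congr EFin.
apply/eqP; rewrite eq_le; apply/andP; split.
  have := J_sub 0; rewrite one_homogeneous0 Jv -EFinD lee_fin add0r.
  by rewrite dualN //; lra.
have := J_sub (2%:R *: v); rewrite J_hom Jv -EFinD lee_fin ger0_norm //.
rewrite -[X in 2%:R *: v - X]scale1r -scalerBl -[_ *: v]addr0 p_lin.
by rewrite dual0 // addr0 (_ : 2%:R - 1 = 1 :> R) ?mul1r; lra.
Qed.

Lemma subdiff_one_homogeneousN v p :
  subdiff J v p -> subdiff J (- v) (fun y => - p y).
Proof.
move=> [p_dual [Jv_fin J_sub]]; have [p_lin _] := p_dual.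
split; first exact: in_dualN.
split; first by rewrite one_homogeneousN.
move=> u; rewrite one_homogeneousN -(one_homogeneousN u).
by rewrite -dualN // opprK opprD; apply: J_sub.
Qed.

Lemma bregman_one_homogeneous0N v p :
  subdiff J v p -> bregman J (fun y => - p y) 0 (- v) = 0%E.
Proof.
move=> Jv_sub; have [[p_lin _] _] := Jv_sub.
rewrite /bregman one_homogeneous0 one_homogeneousN.
rewrite (subdiff_one_homogeneous_eq _ _ Jv_sub) [0 - _]sub0r opprK.
by rewrite -!EFinB sub0r opprK addNr.
Qed.

End OneHomogeneous.

Lemma bregman_ge0 J p u w :
  J u != -oo%E -> subdiff J w p -> (0 <= bregman J p u w)%E.
Proof.
move=> Ju [_ [/EFin_fin_numP[r Jw] J_sub]]; have := J_sub u.
rewrite /bregman Jw; case: (J u) Ju => [x| |] //= _; last by rewrite !addye.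
by rewrite -!EFinD !lee_fin; lra.
Qed.

Lemma infconv_ge0 (F G : X -> \bar R) u :
  (forall x, 0 <= F x)%E -> (forall x, 0 <= G x)%E -> (0 <= infconv F G u)%E.
Proof.
move=> F_ge0 G_ge0; apply: le_ereal_inf_tmp => _ [z _ <-].
exact: adde_ge0.
Qed.

Lemma infconv_le (F G : X -> \bar R) u z :
  (infconv F G u <= F (u - z)%R + G z)%E.
Proof. by apply: ereal_inf_lbound; exists z. Qed.

End Subgradients.

Theorem lemma1 (R : realType) (X : completeNormedModType R)
  (J : X -> \bar R) (v : X) (p : X -> R) :
  proper_valued J -> convex_fun J -> abs_one_homogeneous J ->
  subdiff J v p ->
  [set u | bregman J p u v = 0%E]
    `<=` [set u | infconv (fun x => bregman J p x v)
                          (fun x => bregman J (fun y => - p y) x (- v)) u = 0%E].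
Proof.
move=> J_proper _ J_hom Jv_sub u /= Bu.
apply/eqP; rewrite eq_le; apply/andP; split.
  have := @infconv_le R X (fun x => bregman J p x v)
    (fun x => bregman J (fun y => - p y) x (- v)) u 0.
  by rewrite subr0 Bu bregman_one_homogeneous0N // adde0.
apply: infconv_ge0 => x; apply: bregman_ge0 => //.
exact: subdiff_one_homogeneousN.
Qed.
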